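(* Let $(G,S,C,\phi_0)$ be a minimal counterexample, and let $f=[uvw]$ be a $3$-face of $G$ with $d(u)=d(w)=3$ and $u,w\notin S$. Then every edge $e$ of $f$ is full, i.e., $C_e$ is a perfect matching.
   Context: All graphs are finite and simple. Two cycles are adjacent if they share at least one common edge. A $3$-correspondence assignment for $G$ consists of the list $L(u)=\{1,2,3\}$ for each vertex together with, for each edge $e=uv$, a matching $C_e$ (not necessarily perfect) between $\{u\}\times\{1,2,3\}$ and $\{v\}\times\{1,2,3\}$. A $C$-coloring is a map $\phi$ to $\{1,2,3\}$ with $(u,\phi(u))(v,\phi(v))\notin E(C_{uv})$ for every edge $uv$. For a closed walk $v_1\dots v_m$ ($v_m=v_1$), $C$ is inconsistent on it if there are colors $c_i$ with $(v_i,c_i)(v_{i+1},c_{i+1})\in E(C_{v_iv_{i+1}})$ for all $i\in[m-1]$ and $c_1\ne c_m$. A counterexample is a quadruple $(G,S,C,\phi_0)$ where $G$ is a plane graph with no two adjacent cycles of length at most $8$, $S\subseteq V(G)$ with $|S|\le 12$ is either a single vertex or the vertex set of the boundary of a face, $C$ is a $3$-correspondence assignment consistent on every closed walk of length $3$, and $\phi_0$ is a $C$-coloring of $G[S]$ that does not extend to a $C$-coloring of $G$. A minimal counterexample is a counterexample minimizing $|V(G)|$, subject to that minimizing $|E(G)|-|E(G[S])|$, and subject to both maximizing $\sum_{uv\in E(G)}|E(C_{uv})|$. A $k$-face is a face whose boundary has $k$ vertices; $[v_1\dots v_k]$ denotes the face with boundary vertices in this cyclic order. *)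

From HB Require Import structures.
From mathcomp Require Import all_boot all_order all_algebra.
From mathcomp Require Import classical_sets boolp reals topology normedtype.
Import numFieldNormedType.Exports.
Set Implicit Arguments. Unset Strict Implicit. Unset Printing Implicit Defensive.
Import Order.TTheory GRing.Theory Num.Theory.
Local Open Scope classical_set_scope.
Local Open Scope ring_scope.

Section PlaneGraphs.
Variable R : realType.
Local Notation pt := (R * R)%type.

Definition unit_itv : set R := [set t | 0 <= t <= 1].
Definition open_unit_itv : set R := [set t | 0 < t < 1].

(** A graph on vertex set 'I_n with adjacency [adj]; drawn in the plane with
    vertex positions [pos] and, for every pair u < v, an arc [arc u v] from
    pos u to pos v parametrized by [0,1].  [earc u v] is the arc oriented from
    u to v for any order of u, v. *)
Definition earc n (arc : 'I_n -> 'I_n -> R -> pt) (u v : 'I_n) : R -> pt :=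
  if (u < v)%N then arc u v else (fun t => arc v u (1 - t)).

Definition edge_pts n (arc : 'I_n -> 'I_n -> R -> pt) (u v : 'I_n) : set pt :=
  earc arc u v @` unit_itv.

Definition plane_graph n (adj : rel 'I_n) (pos : 'I_n -> pt)
    (arc : 'I_n -> 'I_n -> R -> pt) : Prop :=
  [/\ (forall u v, adj u v = adj v u),
      (forall u, ~~ adj u u),
      injective pos,
      (forall u v, adj u v ->
         [/\ {within unit_itv, continuous (earc arc u v)},
             (forall s t, unit_itv s -> unit_itv t ->
                earc arc u v s = earc arc u v t -> s = t),
             earc arc u v 0 = pos u, earc arc u v 1 = pos v &
             (forall t w, open_unit_itv t -> earc arc u v t <> pos w)]) &
      (forall u v u' v', adj u v -> adj u' v' ->
         ~ ((u = u' /\ v = v') \/ (u = v' /\ v = u')) ->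
         forall s t, open_unit_itv s -> open_unit_itv t ->
         earc arc u v s <> earc arc u' v' t)].

Definition drawing n (adj : rel 'I_n) (pos : 'I_n -> pt)
    (arc : 'I_n -> 'I_n -> R -> pt) : set pt :=
  [set p | exists v, p = pos v] `|`
  [set p | exists u v, adj u v /\ edge_pts arc u v p].

Definition is_face n (adj : rel 'I_n) (pos : 'I_n -> pt)
    (arc : 'I_n -> 'I_n -> R -> pt) (F : set pt) : Prop :=
  exists2 x, ~ drawing adj pos arc x &
    F = connected_component (~` drawing adj pos arc) x.

(** A vertex lies on the boundary of the face F (F is open and disjoint from
    the drawing, so this is: pos v lies in the closure of F). *)
Definition on_face_boundary n (pos : 'I_n -> pt) (F : set pt) (v : 'I_n) : Prop :=
  closure F (pos v).

Definition edge_on_face n (arc : 'I_n -> 'I_n -> R -> pt) (F : set pt)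
    (u v : 'I_n) : Prop :=
  edge_pts arc u v `<=` closure F.

End PlaneGraphs.

Definition deg n (adj : rel 'I_n) (v : 'I_n) : nat := #|[set x | adj v x]%SET|.

(** A 3-correspondence assignment: lists are {1,2,3} (= 'I_3) for every vertex;
    [M u v c d] means (u,c)(v,d) is an edge of C_uv. *)
Definition corr3 n (adj : rel 'I_n) (M : 'I_n -> 'I_n -> 'I_3 -> 'I_3 -> bool) : Prop :=
  [/\ (forall u v c d, M u v c d = M v u d c),
      (forall u v c d, M u v c d -> adj u v) &
      (forall u v c d d', M u v c d -> M u v c d' -> d = d')].

Definition full_edge n (M : 'I_n -> 'I_n -> 'I_3 -> 'I_3 -> bool) (u v : 'I_n) : Prop :=
  (forall c, exists d, M u v c d) /\ (forall d, exists c, M u v c d).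

Definition closed_walk n (adj : rel 'I_n) (m : nat) (w : nat -> 'I_n) : Prop :=
  (forall i, (i < m)%N -> adj (w i) (w i.+1)) /\ w m = w 0%N.

Definition inconsistent_on n (M : 'I_n -> 'I_n -> 'I_3 -> 'I_3 -> bool)
    (m : nat) (w : nat -> 'I_n) : Prop :=
  exists c : nat -> 'I_3,
    (forall i, (i < m)%N -> M (w i) (w i.+1) (c i) (c i.+1)) /\ c 0%N <> c m.

Definition consistent_on_closed_walks_of_length n (adj : rel 'I_n)
    (M : 'I_n -> 'I_n -> 'I_3 -> 'I_3 -> bool) (m : nat) : Prop :=
  forall w, closed_walk adj m w -> ~ inconsistent_on M m w.

Definition is_C_coloring n (adj : rel 'I_n) (M : 'I_n -> 'I_n -> 'I_3 -> 'I_3 -> bool)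
    (phi : 'I_n -> 'I_3) : Prop :=
  forall u v, adj u v -> ~~ M u v (phi u) (phi v).

(** phi0 is a C-coloring of G[S] (its values outside S are irrelevant). *)
Definition is_C_coloring_on n (adj : rel 'I_n) (M : 'I_n -> 'I_n -> 'I_3 -> 'I_3 -> bool)
    (S : {set 'I_n}) (phi0 : 'I_n -> 'I_3) : Prop :=
  forall u v, u \in S -> v \in S -> adj u v -> ~~ M u v (phi0 u) (phi0 v).

Definition extends_to_C_coloring n (adj : rel 'I_n)
    (M : 'I_n -> 'I_n -> 'I_3 -> 'I_3 -> bool) (S : {set 'I_n}) (phi0 : 'I_n -> 'I_3) : Prop :=
  exists phi, is_C_coloring adj M phi /\ forall v, v \in S -> phi v = phi0 v.

Definition is_cycle n (adj : rel 'I_n) (c : seq 'I_n) : Prop :=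
  [/\ (3 <= size c)%N, uniq c & cycle adj c].

Definition cycle_edge n (c : seq 'I_n) (u v : 'I_n) : Prop :=
  exists2 i, (i < size c)%N &
    let x := nth u c i in let y := nth u c (i.+1 %% size c) in
    (x = u /\ y = v) \/ (x = v /\ y = u).

Definition same_cycle n (c1 c2 : seq 'I_n) : Prop :=
  forall u v, cycle_edge c1 u v <-> cycle_edge c2 u v.

Definition no_adjacent_short_cycles n (adj : rel 'I_n) : Prop :=
  forall c1 c2, is_cycle adj c1 -> is_cycle adj c2 ->
    (size c1 <= 8)%N -> (size c2 <= 8)%N -> ~ same_cycle c1 c2 ->
    ~ exists u v, cycle_edge c1 u v /\ cycle_edge c2 u v.

Definition counterexample (R : realType) n (adj : rel 'I_n) (pos : 'I_n -> (R * R)%type)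
    (arc : 'I_n -> 'I_n -> R -> (R * R)%type) (S : {set 'I_n})
    (M : 'I_n -> 'I_n -> 'I_3 -> 'I_3 -> bool) (phi0 : 'I_n -> 'I_3) : Prop :=
  [/\ plane_graph adj pos arc,
      no_adjacent_short_cycles adj,
      (#|S| <= 12)%N /\
        ((exists v, S = [set v]%SET) \/
         (exists F, is_face adj pos arc F /\
            forall v, v \in S <-> on_face_boundary pos F v)),
      corr3 adj M /\ consistent_on_closed_walks_of_length adj M 3 &
      is_C_coloring_on adj M S phi0 /\ ~ extends_to_C_coloring adj M S phi0].

Definition num_edges n (adj : rel 'I_n) : nat :=
  #|[set p : 'I_n * 'I_n | (p.1 < p.2)%N && adj p.1 p.2]%SET|.

Definition num_edges_in n (adj : rel 'I_n) (S : {set 'I_n}) : nat :=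
  #|[set p : 'I_n * 'I_n | [&& (p.1 < p.2)%N, adj p.1 p.2, p.1 \in S & p.2 \in S]]%SET|.

Definition corr_size n (adj : rel 'I_n) (M : 'I_n -> 'I_n -> 'I_3 -> 'I_3 -> bool) : nat :=
  \sum_(p : 'I_n * 'I_n | (p.1 < p.2)%N && adj p.1 p.2)
     #|[set cd : 'I_3 * 'I_3 | M p.1 p.2 cd.1 cd.2]%SET|.

(** Minimal counterexample: minimize |V(G)|, then |E(G)| - |E(G[S])|, then
    maximize the sum of |E(C_uv)|. *)
Definition minimal_counterexample (R : realType) n (adj : rel 'I_n)
    (pos : 'I_n -> (R * R)%type) (arc : 'I_n -> 'I_n -> R -> (R * R)%type)
    (S : {set 'I_n}) (M : 'I_n -> 'I_n -> 'I_3 -> 'I_3 -> bool)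
    (phi0 : 'I_n -> 'I_3) : Prop :=
  counterexample adj pos arc S M phi0 /\
  forall n' (adj' : rel 'I_n') (pos' : 'I_n' -> (R * R)%type)
         (arc' : 'I_n' -> 'I_n' -> R -> (R * R)%type) (S' : {set 'I_n'})
         (M' : 'I_n' -> 'I_n' -> 'I_3 -> 'I_3 -> bool) (phi0' : 'I_n' -> 'I_3),
    counterexample adj' pos' arc' S' M' phi0' ->
    [/\ (n <= n')%N,
        n' = n -> (num_edges adj - num_edges_in adj S <=
                   num_edges adj' - num_edges_in adj' S')%N &
        n' = n -> (num_edges adj' - num_edges_in adj' S')%N =
                  (num_edges adj - num_edges_in adj S)%N ->
        (corr_size adj' M' <= corr_size adj M)%N].

From HB Require Import structures.
From mathcomp Require Import all_boot all_order all_algebra.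
From mathcomp Require Import classical_sets boolp reals topology normedtype.
Import numFieldNormedType.Exports.
Set Implicit Arguments. Unset Strict Implicit. Unset Printing Implicit Defensive.

(* Suppose some edge of the triangle uvw is not full.  On the triangle, C is a
   consistent triple of partial matchings of the colours; a finite search shows
   that it can be replaced by a consistent triple of perfect matchings under
   which, for every colour of v and every pair of colours forbidden at u and w,
   u and w are no easier to colour than before.  No other triangle shares an
   edge with uvw, so the new assignment is still consistent on closed walks of
   length 3; every triangle edge meets u or w, which lie outside S, so phi0 is
   still a colouring of G[S]; and since u and w have degree 3, each has a single
   neighbour outside the triangle, forbidding at most one colour, so a colouring
   for the new assignment becomes one for C after recolouring u and w.  This
   gives a counterexample with strictly more correspondence edges, contradicting
   minimality. *)

Definition o0 : 'I_3 := @Ordinal 3 0 isT.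
Definition o1 : 'I_3 := @Ordinal 3 1 isT.
Definition o2 : 'I_3 := @Ordinal 3 2 isT.
Definition colours : seq 'I_3 := [:: o0; o1; o2].
Definition ocolours : seq (option 'I_3) := None :: map Some colours.

Definition prod3 (A B C : Type) (sa : seq A) (sb : seq B) (sc : seq C) :
    seq (A * B * C) :=
  [seq (ab, c) | ab <- [seq (a, b) | a <- sa, b <- sb], c <- sc].

Lemma mem_colours c : c \in colours.
Proof. by case: c => [[|[|[|c]]] ?]. Qed.

Lemma mem_ocolours x : x \in ocolours.
Proof. by case: x => [c|] //; rewrite inE map_f ?mem_colours ?orbT. Qed.

Lemma mem_prod3 (A B C : eqType) (sa : seq A) (sb : seq B) (sc : seq C) a b c :
  ((a, b, c) \in prod3 sa sb sc) = [&& a \in sa, b \in sb & c \in sc].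
Proof.
apply/allpairsP/and3P => [[[ab c'] [/allpairsP [[a' b'] [/= ? ? ->]] ? [-> -> ->]]] //|].
by case=> ? ? ?; exists ((a, b), c); split=> //; apply/allpairsP; exists (a, b).
Qed.

(* The computations below compare colours with [eqn] rather than with the
   generic [==], whose evaluation through the structure instances is far
   slower under [vm_compute]. *)
Definition eqc (a b : 'I_3) : bool := eqn a b.
Definition neqo (x : option 'I_3) (b : 'I_3) : bool :=
  if x is Some a then ~~ eqc a b else true.

Lemma eqcE a b : eqc a b = (a == b).
Proof. by []. Qed.

Lemma neqoE x b : neqo x b = (x != Some b).
Proof. by case: x. Qed.

(* A partial matching of the colours, as the images of the colours 0, 1, 2. *)
Definition pmap3 := (option 'I_3 * option 'I_3 * option 'I_3)%type.

Definition papp (f : pmap3) (c : 'I_3) : option 'I_3 :=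
  match nat_of_ord c with 0 => f.1.1 | 1 => f.1.2 | _ => f.2 end.

Definition prel (f : pmap3) (c d : 'I_3) : bool := ~~ neqo (papp f c) d.

Lemma prelE f c d : prel f c d = (papp f c == Some d).
Proof. by rewrite /prel neqoE negbK. Qed.

Lemma prel_fun f c d d' : prel f c d -> prel f c d' -> d = d'.
Proof. by rewrite !prelE => /eqP -> /eqP []. Qed.

Definition pinjb (f : pmap3) : bool :=
  all (fun c => all (fun c' => all (fun d =>
    prel f c d && prel f c' d ==> eqc c c') colours) colours) colours.

Lemma pinjbP f :
  reflect (forall c c' d, prel f c d -> prel f c' d -> c = c') (pinjb f).
Proof.
apply: (iffP idP) => [inj c c' d fcd fc'd | inj].
  move/allP/(_ c (mem_colours c))/allP/(_ c' (mem_colours c'))/allP: inj.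
  by move/(_ d (mem_colours d)); rewrite fcd fc'd eqcE => /eqP.
apply/allP=> c _; apply/allP=> c' _; apply/allP=> d _; apply/implyP=> /andP[fcd fc'd].
by rewrite eqcE (inj c c' d).
Qed.

Definition pbijb (f : pmap3) : bool :=
  all (fun c => has (prel f c) colours) colours &&
  all (fun d => has (prel f ^~ d) colours) colours.

Lemma pbijbP f : pbijb f ->
  (forall c, exists d, prel f c d) /\ (forall d, exists c, prel f c d).
Proof.
case/andP=> /allP tot /allP sur; split.
  by move=> c; have /hasP[d _ fcd] := tot c (mem_colours c); exists d.
by move=> d; have /hasP[c _ fcd] := sur d (mem_colours d); exists c.
Qed.

Definition pmap_of (r : 'I_3 -> 'I_3 -> bool) : pmap3 :=
  ([pick d | r o0 d], [pick d | r o1 d], [pick d | r o2 d]).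

Section PmapOf.
Variable r : 'I_3 -> 'I_3 -> bool.
Hypothesis r_fun : forall c d d', r c d -> r c d' -> d = d'.

Lemma prel_pmap_of c d : prel (pmap_of r) c d = r c d.
Proof.
rewrite prelE; have -> : papp (pmap_of r) c = [pick d | r c d].
  by case: c => [[|[|[|c]]] ?] //=; apply: eq_pick => e; congr (r _ e); exact: val_inj.
case: pickP => [d' rcd'|/(_ d) -> //].
by apply/eqP/idP => [[<-] //|rcd]; rewrite (r_fun rcd' rcd).
Qed.

Lemma pinjb_pmap_of : (forall c c' d, r c d -> r c' d -> c = c') -> pinjb (pmap_of r).
Proof. by move=> inj; apply/pinjbP=> c c' d; rewrite !prel_pmap_of; apply: inj. Qed.

End PmapOf.

(* A correspondence on a triangle with corners 0, 1, 2: the three partial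
   matchings on the edges 01, 12 and 20, in this orientation. *)
Definition tcorr := (pmap3 * pmap3 * pmap3)%type.

Definition trel (T : tcorr) (i j : 'I_3) (c d : 'I_3) : bool :=
  match nat_of_ord i, nat_of_ord j with
  | 0, 1 => prel T.1.1 c d | 1, 0 => prel T.1.1 d c
  | 1, 2 => prel T.1.2 c d | 2, 1 => prel T.1.2 d c
  | 2, 0 => prel T.2 c d   | 0, 2 => prel T.2 d c
  | _, _ => false end.

Lemma trel_sym T i j c d : trel T i j c d = trel T j i d c.
Proof. by case: i => [[|[|[|i]]] ?]; case: j => [[|[|[|j]]] ?]. Qed.

Definition tri_functional (T : tcorr) : Prop :=
  forall i j c d d', trel T i j c d -> trel T i j c d' -> d = d'.

Definition tri_total (T : tcorr) : Prop :=
  forall i j c, i != j -> exists d, trel T i j c d.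

Lemma tri_functional_pinjb (T : tcorr) :
  pinjb T.1.1 -> pinjb T.1.2 -> pinjb T.2 -> tri_functional T.
Proof.
move=> /pinjbP inj1 /pinjbP inj2 /pinjbP inj3 i j c d d'.
by case: i => [[|[|[|i]]] ?]; case: j => [[|[|[|j]]] ?] //= T1 T2;
  first [exact: prel_fun T1 T2 | exact: inj1 T1 T2 | exact: inj2 T1 T2 | exact: inj3 T1 T2].
Qed.

Lemma tri_total_pbijb (T : tcorr) :
  pbijb T.1.1 -> pbijb T.1.2 -> pbijb T.2 -> tri_total T.
Proof.
move=> /pbijbP[t1 s1] /pbijbP[t2 s2] /pbijbP[t3 s3] i j c.
by case: i => [[|[|[|i]]] ?]; case: j => [[|[|[|j]]] ?] //= _;
  first [exact: t1 | exact: s1 | exact: t2 | exact: s2 | exact: t3 | exact: s3].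
Qed.

Definition distinct3 : seq ('I_3 * 'I_3 * 'I_3) :=
  [:: (o0, o1, o2); (o1, o2, o0); (o2, o0, o1);
      (o0, o2, o1); (o2, o1, o0); (o1, o0, o2)].

Definition tri_consistent (T : tcorr) : bool :=
  all (fun ijk : 'I_3 * 'I_3 * 'I_3 => let: (i, j, k) := ijk in
    all (fun c0 => all (fun c1 => if trel T i j c0 c1 then
      all (fun c2 => if trel T j k c1 c2 then
        all (fun c3 => trel T k i c2 c3 ==> eqc c0 c3) colours else true)
        colours else true) colours) colours) distinct3.

Lemma tri_consistentP T : tri_consistent T ->
  forall i j k c0 c1 c2 c3, i != j -> j != k -> k != i ->
  trel T i j c0 c1 -> trel T j k c1 c2 -> trel T k i c2 c3 -> c0 = c3.
Proof.
move=> /allP cons i j k c0 c1 c2 c3 ij jk ki.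
have : (i, j, k) \in distinct3.
  by move: ij jk ki; case: i => [[|[|[|i]]] ?]; case: j => [[|[|[|j]]] ?];
    case: k => [[|[|[|k]]] ?].
move=> /cons + T01 T12 T23; move/allP/(_ c0 (mem_colours c0))/allP/(_ c1 (mem_colours c1)).
rewrite T01 => /allP/(_ c2 (mem_colours c2)); rewrite T12.
by move/allP/(_ c3 (mem_colours c3)); rewrite T23 eqcE => /eqP.
Qed.

Definition chain (f g h : pmap3) (c : 'I_3) : bool :=
  if papp f c is Some c1 then if papp g c1 is Some c2 then
    if papp h c2 is Some c3 then eqc c3 c else true else true else true.

(* Consistency along the three rotations of the orientation 0 -> 1 -> 2 -> 0;
   it is cheaper to evaluate than [tri_consistent]. *)
Definition chain_consistent (T : tcorr) : bool :=
  let: (f, g, h) := T in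
  all (fun c => [&& chain f g h c, chain g h f c & chain h f g c]) colours.

Lemma chainP f g h c :
  (forall c1 c2 c3, prel f c c1 -> prel g c1 c2 -> prel h c2 c3 -> c3 = c) ->
  chain f g h c.
Proof.
rewrite /chain => cons; case E1: (papp f c) => [c1|] //.
case E2: (papp g c1) => [c2|] //; case E3: (papp h c2) => [c3|] //.
by rewrite eqcE (cons c1 c2 c3) ?prelE ?E1 ?E2 ?E3.
Qed.

Definition tri_colourable (T : tcorr) (p : 'I_3) (fu fw : option 'I_3) : bool :=
  has (fun a => has (fun b => [&& neqo fu a, neqo fw b, ~~ trel T o0 o1 a p,
     ~~ trel T o1 o2 p b & ~~ trel T o2 o0 b a]) colours) colours.

Definition colourability (T : tcorr) : seq bool :=
  [seq tri_colourable T q.1.1 q.1.2 q.2 | q <- prod3 colours ocolours ocolours].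

Lemma all2_implb_map (A : eqType) (f g : A -> bool) s x :
  all2 implb (map f s) (map g s) -> x \in s -> f x -> g x.
Proof.
elim: s => [|y s IH] //= /andP[fgy fgs]; rewrite inE => /orP[/eqP-> | xs].
  exact/implyP.
exact: IH.
Qed.

Lemma colourability_le T T' : all2 implb (colourability T') (colourability T) ->
  forall p fu fw, tri_colourable T' p fu fw -> tri_colourable T p fu fw.
Proof.
move=> le p fu fw; apply: (all2_implb_map (x := (p, fu, fw)) le).
by rewrite mem_prod3 mem_colours !mem_ocolours.
Qed.

Definition pmaps : seq pmap3 := [seq f <- prod3 ocolours ocolours ocolours | pinjb f].

Lemma mem_pmaps f : (f \in pmaps) = pinjb f.
Proof. by case: f => [[x y] z]; rewrite mem_filter mem_prod3 !mem_ocolours !andbT. Qed.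

Definition completions : seq tcorr :=
  let P := [seq f <- pmaps | pbijb f] in [seq T <- prod3 P P P | tri_consistent T].

Lemma completion_certificate :
  let C := [seq colourability T' | T' <- completions] in
  all (fun T => chain_consistent T ==>
         let cT := colourability T in has (fun cT' => all2 implb cT' cT) C)
      (prod3 pmaps pmaps pmaps).
Proof. by vm_compute. Qed.

Lemma triangle_completion (T : tcorr) :
  pinjb T.1.1 -> pinjb T.1.2 -> pinjb T.2 -> chain_consistent T ->
  exists T' : tcorr, [/\ tri_functional T', tri_total T', tri_consistent T' &
    forall p fu fw, tri_colourable T' p fu fw -> tri_colourable T p fu fw].
Proof.
move=> inj1 inj2 inj3 cons.
have T_in : T \in prod3 pmaps pmaps pmaps.
  case: T inj1 inj2 inj3 cons => [[f g] h] /= i1 i2 i3 _.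
  by rewrite mem_prod3 !mem_pmaps i1 i2 i3.
have /hasP[_ /mapP[[[f g] h] T'_in ->] le] :=
  implyP (allP completion_certificate T T_in) cons.
move: T'_in; rewrite mem_filter mem_prod3 !(mem_filter pbijb) !mem_pmaps.
case/and4P=> cons' /andP[bij1 inj1'] /andP[bij2 inj2'] /andP[bij3 inj3'].
exists (f, g, h); split=> //; last exact: colourability_le.
  exact: tri_functional_pinjb.
exact: tri_total_pbijb.
Qed.

Lemma consistent3P n (adj : rel 'I_n) M :
  consistent_on_closed_walks_of_length adj M 3 <->
  (forall x y z c0 c1 c2 c3, adj x y -> adj y z -> adj z x ->
     M x y c0 c1 -> M y z c1 c2 -> M z x c2 c3 -> c0 = c3).
Proof.
split=> [cons x y z c0 c1 c2 c3 xy yz zx M01 M12 M23 | tri w [w_adj w3] [c [wM c03]]].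
  case: (eqVneq c0 c3) => // c0c3; exfalso; apply: (cons (nth x [:: x; y; z; x])).
    by split; first by case=> [|[|[|i]]].
  by exists (nth c0 [:: c0; c1; c2; c3]); split; [by case=> [|[|[|i]]] | exact/eqP].
have := wM 2 isT; have := w_adj 2 isT; rewrite w3 => zx M23.
by apply: c03; apply: tri (w_adj 0 isT) (w_adj 1 isT) zx (wM 0 isT) (wM 1 isT) M23.
Qed.

Lemma triangle_common_neighbour n (adj : rel 'I_n) a b c z :
  (forall x y, adj x y = adj y x) -> (forall x, ~~ adj x x) ->
  no_adjacent_short_cycles adj ->
  a != b -> b != c -> c != a -> adj a b -> adj b c -> adj c a ->
  adj a z -> adj b z -> z = c.
Proof.
move=> adj_sym adj_irr no_adj ab bc ca adj_ab adj_bc adj_ca adj_az adj_bz.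
case: (eqVneq z c) => // zc; exfalso.
have za : z != a by apply: contraTneq adj_az => ->; exact: adj_irr.
have zb : z != b by apply: contraTneq adj_bz => ->; exact: adj_irr.
apply: (no_adj [:: a; b; c] [:: a; b; z]) => //.
- split=> //=; last by rewrite adj_ab adj_bc adj_ca.
  by rewrite !inE negb_or ab eq_sym ca bc.
- split=> //=; last by rewrite adj_ab adj_bz adj_sym adj_az.
  by rewrite !inE negb_or ab !(eq_sym _ z) za zb.
- move=> same; have : cycle_edge [:: a; b; z] b c by apply/same; exists 1 => //; left.
  by case=> [[|[|[|k]]] //= _ [] [E1 E2]];
    move: ab bc ca zc; rewrite ?E1 ?E2 ?eqxx.
- by exists a, b; split; exists 0 => //; left.
Qed.

Lemma deg3_other_neighbours n (adj : rel 'I_n) a b1 b2 :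
  deg adj a = 3 -> adj a b1 -> adj a b2 -> b1 != b2 ->
  #|[set x | adj a x] :\ b1 :\ b2| = 1.
Proof.
rewrite /deg (cardsD1 b1) (cardsD1 b2 (_ :\ b1)) !inE => + ab1 ab2 b12.
by rewrite ab1 ab2 eq_sym b12 !add1n => -[].
Qed.

Definition pairs (r : 'I_3 -> 'I_3 -> bool) : {set 'I_3 * 'I_3} := [set cd | r cd.1 cd.2].

Section MatchingCard.
Variable r : 'I_3 -> 'I_3 -> bool.
Hypothesis r_fun : forall c d d', r c d -> r c d' -> d = d'.

Lemma card_fst_pairs : #|[set cd.1 | cd in pairs r]| = #|pairs r|.
Proof.
apply: card_in_imset => -[c d] [c' d']; rewrite !inE /= => rcd rc'd' cc'.
by rewrite cc' in rcd *; rewrite (r_fun rcd rc'd').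
Qed.

Lemma card_pairs_le3 : #|pairs r| <= 3.
Proof. by rewrite -card_fst_pairs (leq_trans (max_card _)) ?card_ord. Qed.

Lemma card_pairs_total : (forall c, exists d, r c d) -> #|pairs r| = 3.
Proof.
move=> tot; have fst_full : [set: 'I_3]%SET \subset [set cd.1 | cd in pairs r].
  apply/fintype.subsetP=> c _; have [d rcd] := tot c.
  by apply/imsetP; exists (c, d); rewrite ?inE.
move: (subset_leq_card fst_full); rewrite cardsT card_ord card_fst_pairs => ge3.
by apply/eqP; rewrite eqn_leq card_pairs_le3.
Qed.

Lemma total_of_card_pairs : #|pairs r| = 3 -> forall c, exists d, r c d.
Proof.
rewrite -card_fst_pairs => card3 c.
have /eqP fst_all : [set cd.1 | cd in pairs r] == [set: 'I_3]%SET.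
  by rewrite eqEcard finset.subsetT cardsT card_ord card3.
have : c \in [set cd.1 | cd in pairs r] by rewrite fst_all finset.in_setT.
by case/imsetP=> -[c' d] /[!inE] /= rcd ->; exists d.
Qed.

End MatchingCard.

Lemma card_pairs_flip r : #|pairs (fun d c => r c d)| = #|pairs r|.
Proof.
have swap_inj : injective (fun cd : 'I_3 * 'I_3 => (cd.2, cd.1)).
  by move=> [? ?] [? ?] [-> ->].
rewrite -(card_imset _ swap_inj); apply: eq_card => -[d c].
apply/imsetP/idP => [[[c' d'] /[!inE] rcd [-> ->]] //|]; rewrite !inE => rcd.
by exists (c, d); rewrite ?inE.
Qed.

Lemma full_edge_of_card3 n (adj : rel 'I_n) M x y :
  corr3 adj M -> #|pairs (M x y)| = 3 -> full_edge M x y.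
Proof.
case=> M_sym _ M_fun card3; split; first exact: total_of_card_pairs (M_fun x y) card3.
apply: (total_of_card_pairs (r := fun d c => M x y c d)) => [d c c'|].
  by rewrite !(M_sym x y); apply: M_fun.
by rewrite card_pairs_flip.
Qed.

Lemma card_pairs_sym n (K : 'I_n -> 'I_n -> 'I_3 -> 'I_3 -> bool) x y :
  (forall x y c d, K x y c d = K y x d c) -> #|pairs (K y x)| = #|pairs (K x y)|.
Proof.
by move=> K_sym; rewrite -card_pairs_flip; apply: eq_card => cd; rewrite !inE K_sym.
Qed.

Lemma corr_size_lt n (adj : rel 'I_n) M N x y :
  (forall x y, adj x y = adj y x) -> corr3 adj M -> corr3 adj N ->
  (forall x y, adj x y -> #|pairs (M x y)| <= #|pairs (N x y)|) ->
  adj x y -> x != y -> #|pairs (M x y)| < #|pairs (N x y)| ->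
  corr_size adj M < corr_size adj N.
Proof.
move=> adj_sym [M_sym _ _] [N_sym _ _] le adj_xy xy lt.
suff [a [b [lt_ab adj_ab lt_card]]] : exists a b : 'I_n,
    [/\ (a < b)%N, adj a b & #|pairs (M a b)| < #|pairs (N a b)|].
  rewrite /corr_size (bigD1 (a, b)) /= ?lt_ab ?adj_ab //.
  rewrite [X in _ < X](bigD1 (a, b)) /= ?lt_ab ?adj_ab // -addSn leq_add //.
  by apply: leq_sum => -[x' y'] /andP[/andP[_ adj_xy'] _]; apply: le.
case: (ltngtP x y) => [lt_xy|gt_xy|eq_xy]; first by exists x, y.
  by exists y, x; rewrite adj_sym (card_pairs_sym x y M_sym) (card_pairs_sym x y N_sym).
by case/eqP: xy; apply: val_inj.
Qed.

Section Triangle.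
Variables (n : nat) (adj : rel 'I_n) (M : 'I_n -> 'I_n -> 'I_3 -> 'I_3 -> bool).
Variables (u v w : 'I_n).
Hypotheses (adj_sym : forall x y, adj x y = adj y x) (adj_irr : forall x, ~~ adj x x).
Hypotheses (M_corr : corr3 adj M) (M_cons : consistent_on_closed_walks_of_length adj M 3).
Hypothesis no_adj : no_adjacent_short_cycles adj.
Hypotheses (uv : u != v) (vw : v != w) (wu : w != u).
Hypotheses (adj_uv : adj u v) (adj_vw : adj v w) (adj_wu : adj w u).

Lemma M_sym x y c d : M x y c d = M y x d c.
Proof. by case: M_corr. Qed.

Lemma M_adj x y c d : M x y c d -> adj x y.
Proof. by case: M_corr => _ + _; apply. Qed.

Lemma M_fun x y c d d' : M x y c d -> M x y c d' -> d = d'.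
Proof. by case: M_corr => _ _; apply. Qed.

Lemma M_inj x y c c' d : M x y c d -> M x y c' d -> c = c'.
Proof. by rewrite !(M_sym x y); apply: M_fun. Qed.

Lemma M_triangle x y z c0 c1 c2 c3 : adj x y -> adj y z -> adj z x ->
  M x y c0 c1 -> M y z c1 c2 -> M z x c2 c3 -> c0 = c3.
Proof. exact: (consistent3P adj M).1 M_cons x y z c0 c1 c2 c3. Qed.

Lemma neq_of_adj x y : adj x y -> x != y.
Proof. by apply: contraTneq => ->; apply: adj_irr. Qed.

Definition corner (i : 'I_3) : 'I_n := nth u [:: u; v; w] i.

Lemma corner_inj : injective corner.
Proof.
move=> i j /eqP; rewrite nth_uniq ?ltn_ord //= => [/eqP/val_inj //|].
by rewrite !inE negb_or uv eq_sym wu vw.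
Qed.

Lemma adj_corner i j : i != j -> adj (corner i) (corner j).
Proof.
by case: i => [[|[|[|i]]] ?]; case: j => [[|[|[|j]]] ?] //= _; rewrite // adj_sym.
Qed.

Lemma corner_neighbour i j z :
  i != j -> adj (corner i) z -> adj (corner j) z -> exists k, z = corner k.
Proof.
move=> ij; have [k /andP[ki kj]] : exists k, (k != i) && (k != j).
  by case: i j ij => [[|[|[|i]]] ?] [[|[|[|j]]] ?] //= _;
    first [by exists o0 | by exists o1 | by exists o2].
move=> adj_iz adj_jz; exists k.
apply: triangle_common_neighbour adj_sym adj_irr no_adj _ _ _ _ _ _ adj_iz adj_jz.
all: try apply: adj_corner; by rewrite ?(inj_eq corner_inj) // eq_sym.
Qed.

Definition corner_index (x : 'I_n) : option 'I_3 := [pick i | corner i == x].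

Lemma corner_indexK i : corner_index (corner i) = Some i.
Proof.
rewrite /corner_index; case: pickP => [j /eqP/corner_inj -> //|].
by move/(_ i); rewrite eqxx.
Qed.

Lemma corner_indexP x i : corner_index x = Some i -> x = corner i.
Proof. by rewrite /corner_index; case: pickP => // j /eqP <- [->]. Qed.

Lemma corner_index_None x i : corner_index x = None -> corner i != x.
Proof. by move=> none; apply/eqP=> ci; rewrite -ci corner_indexK in none. Qed.

Definition tcorr_M : tcorr := (pmap_of (M u v), pmap_of (M v w), pmap_of (M w u)).

Lemma pinjb_M x y : pinjb (pmap_of (M x y)).
Proof. exact: pinjb_pmap_of (@M_fun x y) (@M_inj x y). Qed.

Lemma prel_M x y : prel (pmap_of (M x y)) =2 M x y.
Proof. exact: prel_pmap_of (@M_fun x y). Qed.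

Lemma trel_tcorr_M i j : i != j -> trel tcorr_M i j =2 M (corner i) (corner j).
Proof.
move=> ij c d; case: i ij => [[|[|[|i]]] ?]; case: j => [[|[|[|j]]] ?] //=;
  rewrite ?eqxx // => _; by rewrite /trel /tcorr_M /= prel_M // M_sym.
Qed.

Lemma chain_consistent_tcorr_M : chain_consistent tcorr_M.
Proof.
apply/allP=> c _; apply/and3P; split;
  apply: chainP => c1 c2 c3; rewrite !prel_M => M1 M2 M3; apply/esym;
  [ apply: M_triangle adj_uv adj_vw adj_wu M1 M2 M3
  | apply: M_triangle adj_vw adj_wu adj_uv M1 M2 M3
  | apply: M_triangle adj_wu adj_uv adj_vw M1 M2 M3 ].
Qed.

Lemma forbidden_colour a b1 b2 (psi : 'I_n -> 'I_3) :
  deg adj a = 3 -> adj a b1 -> adj a b2 -> b1 != b2 ->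
  exists fo : option 'I_3, forall al,
    (forall x, adj a x -> x != b1 -> x != b2 -> ~~ M a x al (psi x)) <-> fo != Some al.
Proof.
move=> deg3 ab1 ab2 b12.
have /cards1P[x0 others] := introT eqP (deg3_other_neighbours deg3 ab1 ab2 b12).
have other x : adj a x -> x != b1 -> x != b2 -> x = x0.
  by move=> ax xb1 xb2; apply/set1P; rewrite -others !inE xb2 xb1 ax.
have : x0 \in [set x | adj a x] :\ b1 :\ b2 by rewrite others set11.
rewrite !inE => /and3P[x0b2 x0b1 ax0].
exists [pick al | M a x0 al (psi x0)] => al; split=> [compat | ne x ax xb1 xb2].
  case: pickP => // al' M_al'; apply/eqP=> -[al'al].
  by move: (compat x0 ax0 x0b1 x0b2); rewrite -al'al M_al'.
rewrite (other x ax xb1 xb2); apply/negP=> M_al; move: ne.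
by case: pickP => [al' M_al'|/(_ al)]; rewrite ?(M_inj M_al' M_al) ?eqxx ?M_al.
Qed.

Lemma recolour_uw (psi : 'I_n -> 'I_3) a b :
  (forall x y, adj x y -> x \notin [:: u; w] -> y \notin [:: u; w] ->
     ~~ M x y (psi x) (psi y)) ->
  (forall x, adj u x -> x != v -> x != w -> ~~ M u x a (psi x)) ->
  (forall x, adj w x -> x != u -> x != v -> ~~ M w x b (psi x)) ->
  ~~ M u v a (psi v) -> ~~ M v w (psi v) b -> ~~ M w u b a ->
  is_C_coloring adj M (fun x => if x == u then a else if x == w then b else psi x).
Proof.
move=> psi_off a_out b_out a_v v_b b_a; set phi := fun x => _.
have phi_u : phi u = a by rewrite /phi eqxx.
have phi_w : phi w = b by rewrite /phi eqxx (negbTE wu).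
have phi_off x : x \notin [:: u; w] -> phi x = psi x.
  by rewrite !inE negb_or => /andP[/negbTE xu /negbTE xw]; rewrite /phi xu xw.
have phi_v : phi v = psi v by rewrite phi_off // !inE negb_or eq_sym uv.
suff from_uw x y : adj x y -> x \in [:: u; w] -> ~~ M x y (phi x) (phi y).
  move=> x y xy; case: (boolP (x \in [:: u; w])) => xuw; first exact: from_uw.
  case: (boolP (y \in [:: u; w])) => yuw; last by rewrite !phi_off //; apply: psi_off.
  by rewrite M_sym; apply: from_uw yuw; rewrite adj_sym.
move=> xy; rewrite !inE => /orP[] /eqP x_eq; rewrite {x}x_eq in xy *.
- rewrite phi_u; case: (eqVneq y v) => [-> | yv]; first by rewrite phi_v.
  case: (eqVneq y w) => [-> | yw]; first by rewrite phi_w M_sym.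
  have yu : y != u by rewrite eq_sym neq_of_adj.
  by rewrite phi_off ?a_out // !inE negb_or yu.
- rewrite phi_w; case: (eqVneq y v) => [-> | yv]; first by rewrite phi_v M_sym.
  case: (eqVneq y u) => [-> | yu]; first by rewrite phi_u.
  have yw : y != w by rewrite eq_sym neq_of_adj.
  by rewrite phi_off ?b_out // !inE negb_or yu.
Qed.

Variables (S : {set 'I_n}) (phi0 : 'I_n -> 'I_3).
Hypotheses (uS : u \notin S) (wS : w \notin S).
Hypotheses (deg_u : deg adj u = 3) (deg_w : deg adj w = 3).

Lemma notin_uw_of_S x : x \in S -> x \notin [:: u; w].
Proof.
by move=> xS; rewrite !inE negb_or; apply/andP; split; apply: contraTneq xS => ->.
Qed.

Section Retriangle.
Variable T : tcorr.
Hypotheses (T_fun : tri_functional T) (T_tot : tri_total T).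
Hypothesis T_cons : tri_consistent T.

Definition retriangle (x y : 'I_n) : 'I_3 -> 'I_3 -> bool :=
  match corner_index x, corner_index y with
  | Some i, Some j => if i != j then trel T i j else M x y
  | _, _ => M x y
  end.

Lemma retriangle_corner i j : i != j -> retriangle (corner i) (corner j) = trel T i j.
Proof. by rewrite /retriangle !corner_indexK => ->. Qed.

Lemma retriangle_id x y :
  (forall i j, i != j -> x = corner i -> y = corner j -> False) ->
  retriangle x y = M x y.
Proof.
rewrite /retriangle => not_tri; case Ex: (corner_index x) => [i|] //.
case Ey: (corner_index y) => [j|] //; case: ifP => // ij.
by case: (not_tri i j ij); apply: corner_indexP.
Qed.

Lemma retriangle_noncorner x y :
  corner_index x = None -> retriangle x y = M x y /\ retriangle y x = M y x.
Proof. by rewrite /retriangle => ->; case: (corner_index y). Qed.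

Lemma retriangle_third x y z :
  adj x z -> adj y z -> corner_index z = None -> retriangle x y = M x y.
Proof.
move=> adj_xz adj_yz z_none; apply: retriangle_id => i j ij xi yj.
rewrite {}xi {}yj in adj_xz adj_yz.
have [k zk] := corner_neighbour ij adj_xz adj_yz.
by move: (corner_index_None k z_none); rewrite zk eqxx.
Qed.

Lemma retriangle_noncorner_triangle x y z :
  adj x y -> adj y z -> adj z x -> corner_index z = None ->
  [/\ retriangle x y = M x y, retriangle y z = M y z & retriangle z x = M z x].
Proof.
move=> adj_xy adj_yz adj_zx z_none; have adj_xz : adj x z by rewrite adj_sym.
split; last by case: (retriangle_noncorner x z_none).
  exact: retriangle_third adj_xz adj_yz z_none.
by case: (retriangle_noncorner y z_none).
Qed.

Lemma corr3_retriangle : corr3 adj retriangle.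
Proof.
rewrite /retriangle; split=> [x y c d | x y c d | x y c d d'].
- case: (corner_index x) => [i|]; case: (corner_index y) => [j|]; try exact: M_sym.
  by rewrite eq_sym; case: ifP => _; [exact: trel_sym | exact: M_sym].
- case Ex: (corner_index x) => [i|]; case Ey: (corner_index y) => [j|];
    try by apply: M_adj.
  case: ifP => ij; last by apply: M_adj.
  by rewrite (corner_indexP Ex) (corner_indexP Ey) => _; apply: adj_corner.
- case: (corner_index x) => [i|]; case: (corner_index y) => [j|];
    try by apply: M_fun.
  by case: ifP => _; [apply: T_fun | apply: M_fun].
Qed.

Lemma consistent_retriangle : consistent_on_closed_walks_of_length adj retriangle 3.
Proof.
apply/consistent3P=> x y z c0 c1 c2 c3 adj_xy adj_yz adj_zx.
case Ex: (corner_index x) => [i|]; last first.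
  have [-> -> ->] := retriangle_noncorner_triangle adj_yz adj_zx adj_xy Ex.
  exact: M_triangle.
case Ey: (corner_index y) => [j|]; last first.
  have [-> -> ->] := retriangle_noncorner_triangle adj_zx adj_xy adj_yz Ey.
  exact: M_triangle.
case Ez: (corner_index z) => [k|]; last first.
  have [-> -> ->] := retriangle_noncorner_triangle adj_xy adj_yz adj_zx Ez.
  exact: M_triangle.
move: adj_xy adj_yz adj_zx.
rewrite (corner_indexP Ex) (corner_indexP Ey) (corner_indexP Ez) => adj_ij adj_jk adj_ki.
have ij : i != j by apply: contraTneq adj_ij => ->; apply: adj_irr.
have jk : j != k by apply: contraTneq adj_jk => ->; apply: adj_irr.
have ki : k != i by apply: contraTneq adj_ki => ->; apply: adj_irr.
rewrite !retriangle_corner //; exact: tri_consistentP.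
Qed.

Lemma retriangle_off_uw x y :
  x \notin [:: u; w] -> y \notin [:: u; w] -> retriangle x y = M x y.
Proof.
move=> xuw yuw; apply: retriangle_id => i j ij xi yj.
move: ij xuw yuw; rewrite {}xi {}yj.
by case: i => [[|[|[|i]]] ?]; case: j => [[|[|[|j]]] ?]; rewrite /= ?inE ?eqxx ?orbT.
Qed.

Lemma retriangle_out x y : y \notin [:: u; v; w] -> retriangle x y = M x y.
Proof.
move=> y_out; apply: retriangle_id => i j _ _ yj.
by move: y_out; rewrite yj mem_nth.
Qed.

Lemma card_pairs_retriangle x y : #|pairs (M x y)| <= #|pairs (retriangle x y)|.
Proof.
rewrite /retriangle; case: (corner_index x) => [i|] //; case: (corner_index y) => [j|] //.
case: ifP => // ij; rewrite (card_pairs_total (@T_fun i j)) ?card_pairs_le3 //.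
  exact: M_fun.
by move=> c; apply: T_tot.
Qed.

Lemma corr_size_retriangle_lt i j : i != j ->
  #|pairs (M (corner i) (corner j))| < 3 -> corr_size adj M < corr_size adj retriangle.
Proof.
move=> ij lt3; apply: (corr_size_lt adj_sym M_corr corr3_retriangle
  (fun x y _ => card_pairs_retriangle x y) (adj_corner ij)).
  by rewrite (inj_eq corner_inj).
by rewrite retriangle_corner // (card_pairs_total (@T_fun i j)) // => c; apply: T_tot.
Qed.

Hypothesis T_dom :
  forall p fu fw, tri_colourable T p fu fw -> tri_colourable tcorr_M p fu fw.

Lemma no_extension_retriangle :
  ~ extends_to_C_coloring adj M S phi0 -> ~ extends_to_C_coloring adj retriangle S phi0.
Proof.
move=> no_ext [psi [psi_col psi_S]]; apply: no_ext.
have adj_uw : adj u w by rewrite adj_sym.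
have adj_wv : adj w v by rewrite adj_sym.
have [fu fuP] := forbidden_colour psi deg_u adj_uv adj_uw vw.
have [fw fwP] := forbidden_colour psi deg_w adj_wu adj_wv uv.
have fu_psi : fu != Some (psi u).
  apply/fuP=> x ux xv xw; rewrite -retriangle_out; first exact: psi_col.
  by rewrite !inE !negb_or xv xw !andbT eq_sym neq_of_adj.
have fw_psi : fw != Some (psi w).
  apply/fwP=> x wx xu xv; rewrite -retriangle_out; first exact: psi_col.
  by rewrite !inE !negb_or xu xv eq_sym neq_of_adj.
have T_psi i j : i != j -> ~~ trel T i j (psi (corner i)) (psi (corner j)).
  by move=> ij; rewrite -retriangle_corner //; apply: psi_col; apply: adj_corner.
have : tri_colourable T (psi v) fu fw.
  apply/hasP; exists (psi u); first exact: mem_colours.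
  apply/hasP; exists (psi w); first exact: mem_colours.
  rewrite !neqoE fu_psi fw_psi.
  by rewrite (T_psi o0 o1 isT) (T_psi o1 o2 isT) (T_psi o2 o0 isT).
case/T_dom/hasP=> a _ /hasP[b _ /and5P[fu_a fw_b a_v v_b b_a]].
rewrite !neqoE in fu_a fw_b.
have {}a_v : ~~ M u v a (psi v) by rewrite -(trel_tcorr_M (i := o0) (j := o1) isT).
have {}v_b : ~~ M v w (psi v) b by rewrite -(trel_tcorr_M (i := o1) (j := o2) isT).
have {}b_a : ~~ M w u b a by rewrite -(trel_tcorr_M (i := o2) (j := o0) isT).
exists (fun x => if x == u then a else if x == w then b else psi x); split.
  apply: (recolour_uw (psi := psi) _ _ _ a_v v_b b_a); last 2 first.
  - exact/fuP.
  - exact/fwP.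
  by move=> x y xy xuw yuw; rewrite -retriangle_off_uw //; apply: psi_col.
move=> x xS; have := notin_uw_of_S xS; rewrite !inE negb_or.
by case/andP=> /negbTE-> /negbTE->; apply: psi_S.
Qed.

Lemma counterexample_retriangle (R : realType) (pos : 'I_n -> (R * R)%type) arc :
  counterexample adj pos arc S M phi0 -> counterexample adj pos arc S retriangle phi0.
Proof.
case=> plane no_adj' S_face _ [phi0_col no_ext]; split=> //.
  by split; [exact: corr3_retriangle | exact: consistent_retriangle].
split; last exact: no_extension_retriangle.
move=> x y xS yS xy; rewrite retriangle_off_uw ?notin_uw_of_S //; exact: phi0_col.
Qed.

End Retriangle.

Lemma full_triangle_or_larger_counterexample
    (R : realType) (pos : 'I_n -> (R * R)%type) arc :
  counterexample adj pos arc S M phi0 ->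
  (full_edge M u v /\ full_edge M v w /\ full_edge M w u) \/
  exists M', counterexample adj pos arc S M' phi0 /\ corr_size adj M < corr_size adj M'.
Proof.
move=> ce; have [T [T_fun T_tot T_cons T_dom]] := @triangle_completion tcorr_M
  (pinjb_M u v) (pinjb_M v w) (pinjb_M w u) chain_consistent_tcorr_M.
case: (boolP [forall i, forall j : 'I_3,
  (i != j) ==> (#|pairs (M (corner i) (corner j))| == 3)]) => [/forallP all3|].
  have full i j : i != j -> full_edge M (corner i) (corner j).
    move=> ij; apply: full_edge_of_card3 M_corr _; apply/eqP.
    exact: implyP (forallP (all3 i) j) ij.
  by left; split; [|split];
    [exact: full o0 o1 isT | exact: full o1 o2 isT | exact: full o2 o0 isT].
case/forallPn=> i /forallPn[j]; rewrite negb_imply => /andP[ij ne3].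
right; exists (retriangle T); split; first exact: counterexample_retriangle ce.
apply: (corr_size_retriangle_lt T_fun T_tot ij).
by rewrite ltn_neqAle ne3 card_pairs_le3 //; apply: M_fun.
Qed.

End Triangle.

Unset Implicit Arguments.
Set Strict Implicit.

Theorem mainTheorem6 (R : realType) (n : nat) (adj : rel 'I_n)
    (pos : 'I_n -> (R * R)%type) (arc : 'I_n -> 'I_n -> R -> (R * R)%type)
    (S : {set 'I_n}) (M : 'I_n -> 'I_n -> 'I_3 -> 'I_3 -> bool)
    (phi0 : 'I_n -> 'I_3) (F : set (R * R)%type) (u v w : 'I_n) :
  minimal_counterexample adj pos arc S M phi0 ->
  is_face adj pos arc F ->
  (* f = [uvw] is a 3-face: its boundary vertices are exactly u, v, w,
     in the cyclic order u, v, w (so uv, vw, wu are its edges) *)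
  u != v -> v != w -> w != u ->
  (forall x, on_face_boundary pos F x <-> x \in [:: u; v; w]) ->
  adj u v -> adj v w -> adj w u ->
  edge_on_face arc F u v -> edge_on_face arc F v w -> edge_on_face arc F w u ->
  deg adj u = 3 -> deg adj w = 3 ->
  u \notin S -> w \notin S ->
  full_edge M u v /\ full_edge M v w /\ full_edge M w u.
Proof.
move=> [ce minimal] _ uv vw wu _ adj_uv adj_vw adj_wu _ _ _ deg_u deg_w uS wS.
have [[adj_sym adj_irr _ _ _] no_adj _ [M_corr M_cons] _] := ce.
have [// | [M' [ce' lt]]] := full_triangle_or_larger_counterexample adj_sym adj_irr
  M_corr M_cons no_adj uv vw wu adj_uv adj_vw adj_wu uS wS deg_u deg_w ce.
have [_ _ /(_ erefl erefl) le] := minimal _ _ _ _ _ _ _ ce'.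
by move: lt; rewrite ltnNge le.
Qed.
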